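(* Let $\mathbf{u}$ be an $m$-dimensional unit vector with entries in $\mathcal{R}_{12}$ with $\mathrm{lde}(\mathbf{u})\geq 1$. Then there exists a sequence $G_1,\ldots,G_q$ of one-level operators of type $\zeta_{12}$ and two-level operators of type $X$ and $H'$ such that $\mathrm{lde}(G_1\cdots G_q\mathbf{u})<\mathrm{lde}(\mathbf{u})$.
   Context: $\zeta_{12}=e^{2\pi i/12}$, $\mathcal{R}_{12}$ is the smallest subring of $\mathbb{C}$ containing $1/2$ and $\zeta_{12}$, and $\mathbb{Z}[\zeta_{12}]$ the smallest subring containing $\zeta_{12}$. Let $\delta=1+i$. For a vector $\mathbf{u}$ over $\mathcal{R}_{12}$, $\mathrm{lde}(\mathbf{u})$ is the smallest $\ell\in\mathbb{N}$ such that $\delta^\ell\mathbf{u}$ has all entries in $\mathbb{Z}[\zeta_{12}]$. $X=\begin{bmatrix}0&1\\1&0\end{bmatrix}$, $H'=\frac{1+i}{2}\begin{bmatrix}1&1\\1&-1\end{bmatrix}$. The one-level operator $c_{[j]}$ of type $c$ is the $m\times m$ identity with $(j,j)$ entry replaced by $c$; the two-level operator $M_{[j,j']}$ ($j<j'$) of type $M\in\mathrm{M}_2(\mathbb{C})$ is the $m\times m$ identity with entries at $(j,j),(j,j'),(j',j),(j',j')$ replaced by $M_{1,1},M_{1,2},M_{2,1},M_{2,2}$. *)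

From HB Require Import structures.
From mathcomp Require Import all_boot all_order all_algebra all_field.
Set Implicit Arguments. Unset Strict Implicit. Unset Printing Implicit Defensive.
Import Order.TTheory GRing.Theory Num.Theory.
Local Open Scope ring_scope.

(* Complex numbers: algebraic complex numbers algC (all relevant numbers are algebraic). *)

(* zeta12 = e^{2 pi i/12} = cos(pi/6) + i sin(pi/6) = (sqrt 3 + i)/2 *)
Definition zeta12 : algC := (sqrtC 3%:R + 'i) / 2%:R.

Definition delta : algC := 1 + 'i.

(* Z[zeta12]: smallest subring of C containing zeta12 = integer polynomials in zeta12 *)
Definition inZzeta (x : algC) : Prop :=
  exists p : {poly int}, x = (map_poly (intr : int -> algC) p).[zeta12].

(* R12: smallest subring of C containing 1/2 and zeta12
   = { p(zeta12) / 2^k : p integer polynomial, k in N } *)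
Definition inR12 (x : algC) : Prop :=
  exists (p : {poly int}) (k : nat),
    x = (map_poly (intr : int -> algC) p).[zeta12] / 2%:R ^+ k.

Definition lde_ok m (u : 'cV[algC]_m) (l : nat) : Prop :=
  forall i, inZzeta (delta ^+ l * u i 0).

Definition is_lde m (u : 'cV[algC]_m) (l : nat) : Prop :=
  lde_ok u l /\ forall l', lde_ok u l' -> (l <= l')%N.

Definition unit_vec m (u : 'cV[algC]_m) : Prop :=
  \sum_(i < m) `|u i 0| ^+ 2 = 1.

Definition one_level m (c : algC) (j : 'I_m) : 'M[algC]_m :=
  \matrix_(a, b) (if a == b then (if a == j then c else 1) else 0).

Definition two_level m (M : 'M[algC]_2) (j j' : 'I_m) : 'M[algC]_m :=
  \matrix_(a, b)
    if (a == j) && (b == j) then M ord0 ord0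
    else if (a == j) && (b == j') then M ord0 ord_max
    else if (a == j') && (b == j) then M ord_max ord0
    else if (a == j') && (b == j') then M ord_max ord_max
    else (if a == b then 1 else 0).

Definition Xmat : 'M[algC]_2 :=
  \matrix_(a, b) (if a == b then 0 else 1).

Definition Hpmat : 'M[algC]_2 :=
  \matrix_(a, b) (if (a == ord_max) && (b == ord_max) then - ((1 + 'i) / 2%:R)
                  else (1 + 'i) / 2%:R).

Definition is_gate m (G : 'M[algC]_m) : Prop :=
  (exists j : 'I_m, G = one_level zeta12 j) \/
  (exists (j j' : 'I_m), (j < j')%N /\ (G = two_level Xmat j j' \/ G = two_level Hpmat j j')).

Definition prod_mx m (Gs : seq 'M[algC]_m) : 'M[algC]_m :=
  foldr (fun G acc => G *m acc) 1%:M Gs.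

Definition all_gates m (Gs : seq 'M[algC]_m) : Prop :=
  forall G, G \in Gs -> is_gate G.

From HB Require Import structures.
From mathcomp Require Import all_boot all_order all_algebra all_field.
From mathcomp Require Import ring.
From Stdlib Require Import Classical Wf_nat.
Set Implicit Arguments. Unset Strict Implicit. Unset Printing Implicit Defensive.
Import Order.TTheory GRing.Theory Num.Theory.
Local Open Scope ring_scope.

(* Write each entry of delta^l u in the Z-basis 1, zeta, zeta^2, zeta^3 of Z[zeta12]; then
   |x|^2 = A + B sqrt 3 with integers A, B given by quadratic forms in the coordinates.
   Since sum |delta^l u_i|^2 = 2^l and sqrt 3 is irrational, sum A = 2^l and sum B = 0, so both
   sums are even when l >= 1.  Modulo 2, an entry is divisible by delta exactly when its residue
   has a certain pattern; otherwise A + B is odd, and the remaining residues form two orbits under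
   multiplication by zeta, told apart by A.  Each orbit thus contains an even number of entries.
   Pair them up: after a power of zeta on one entry of a pair, the two entries sum to an element
   of 2 Z[zeta], and H' = (delta / 2) [[1, 1], [1, -1]] maps such a pair to two multiples of
   delta.  Once every entry is a multiple of delta, the lde has dropped. *)

Local Notation sqrt3 := (sqrtC 3%:R : algC).

Lemma sqrt3_sqr : sqrt3 ^+ 2 = 3%:R.
Proof. by rewrite sqrtCK. Qed.

Lemma zeta12_exp3 : zeta12 ^+ 3 = 'i.
Proof.
rewrite /zeta12; have := sqrt3_sqr; have := @sqrCi algC.
by move: sqrt3 ('i : algC) => s i ei es; field: ei es.
Qed.

Lemma zeta12_exp4 : zeta12 ^+ 4 = zeta12 ^+ 2 - 1.
Proof.
rewrite /zeta12; have := sqrt3_sqr; have := @sqrCi algC.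
by move: sqrt3 ('i : algC) => s i ei es; field: ei es.
Qed.

Lemma deltaE : delta = 1 + zeta12 ^+ 3.
Proof. by rewrite zeta12_exp3. Qed.

Lemma sqr_norm_delta : `|delta| ^+ 2 = 2%:R.
Proof.
rewrite normCK /delta rmorphD /= conjCi rmorph1.
by have := @sqrCi algC; move: ('i : algC) => i ei; ring: ei.
Qed.

Lemma delta_neq0 : delta != 0.
Proof. by rewrite -normr_eq0 -sqrf_eq0 sqr_norm_delta pnatr_eq0. Qed.

(* p^2 = 3 q^2 is impossible for q != 0: the 3-adic valuations have different parities. *)
Lemma sqrt3_irrational (p q : int) : p%:~R + q%:~R * sqrt3 = 0 -> q = 0.
Proof.
move=> h; apply/eqP; apply: contraT => q_neq0.
have sq : p * p = 3 * (q * q).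
  apply: (intr_inj (R := algC)); rewrite !rmorphM /= -[3%:~R]/(3%:R) -sqrt3_sqr.
  have -> : p%:~R = - (q%:~R * sqrt3) :> algC by apply/eqP; rewrite -subr_eq0 opprK h.
  by ring.
have {sq} sq : (`|p| * `|p| = 3 * (`|q| * `|q|))%N.
  by have := congr1 absz sq; rewrite !abszM.
have q_gt0 : (0 < `|q|)%N by rewrite absz_gt0.
have p_gt0 : (0 < `|p|)%N.
  have : (0 < `|p| * `|p|)%N by rewrite sq !muln_gt0 q_gt0.
  by rewrite muln_gt0 andbb.
move/(congr1 (logn 3)): sq; rewrite !lognM ?muln_gt0 ?p_gt0 ?q_gt0 //.
by move/(congr1 odd); rewrite /= !addnn !odd_double.
Qed.

Lemma inZzetaD x y : inZzeta x -> inZzeta y -> inZzeta (x + y).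
Proof. by move=> [p ->] [q ->]; exists (p + q); rewrite rmorphD hornerD. Qed.

Lemma inZzetaB x y : inZzeta x -> inZzeta y -> inZzeta (x - y).
Proof. by move=> [p ->] [q ->]; exists (p - q); rewrite rmorphB hornerD hornerN. Qed.

Lemma inZzetaM x y : inZzeta x -> inZzeta y -> inZzeta (x * y).
Proof. by move=> [p ->] [q ->]; exists (p * q); rewrite rmorphM hornerM. Qed.

Lemma inZzeta_int (k : int) : inZzeta k%:~R.
Proof. by exists k%:P; rewrite map_polyC hornerC. Qed.

Lemma inZzeta_zeta12X n : inZzeta (zeta12 ^+ n).
Proof. by exists 'X^n; rewrite map_polyXn hornerXn. Qed.

Lemma inZzeta_delta : inZzeta delta.
Proof. by rewrite deltaE; apply: inZzetaD (inZzeta_int 1) (inZzeta_zeta12X 3). Qed.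

(* Coordinates (a, b, c, d) stand for a + b zeta + c zeta^2 + d zeta^3.  As zeta^4 = zeta^2 - 1,
   zeta_rot is multiplication by zeta, and since zeta + zeta^-1 = sqrt 3, zeta^2 + zeta^-2 = 1
   and zeta^3 + zeta^-3 = 0, the squared norm is sqnorm_int + sqnorm_sqrt3 * sqrt 3. *)
Section Quadruples.
Context {R : pzRingType}.
Implicit Type r : R * R * R * R.

Definition zeta_rot r : R * R * R * R := let: (a, b, c, d) := r in (- d, a, b + d, c).

Definition sqnorm_int r : R :=
  let: (a, b, c, d) := r in a * a + b * b + c * c + d * d + a * c + b * d.

Definition sqnorm_sqrt3 r : R := let: (a, b, c, d) := r in a * b + b * c + c * d.

End Quadruples.

Definition quad_map {R S : Type} (f : R -> S) (r : R * R * R * R) : S * S * S * S :=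
  let: (a, b, c, d) := r in (f a, f b, f c, f d).

Section QuadMorphism.
Variables (R S : pzRingType) (f : {rmorphism R -> S}).
Implicit Type r : R * R * R * R.

Lemma quad_mapD r r' : quad_map f (r + r') = quad_map f r + quad_map f r'.
Proof. by case: r r' => [[[a b] c] d] [[[a' b'] c'] d']; rewrite /= !rmorphD. Qed.

Lemma quad_map_iter_rot k r : quad_map f (iter k zeta_rot r) = iter k zeta_rot (quad_map f r).
Proof.
elim: k => //= k <-; case: (iter k zeta_rot r) => [[[a b] c] d].
by rewrite /= rmorphN rmorphD.
Qed.

Lemma sqnorm_int_map r : sqnorm_int (quad_map f r) = f (sqnorm_int r).
Proof. by case: r => [[[a b] c] d]; rewrite /= !rmorphD !rmorphM. Qed.

Lemma sqnorm_sqrt3_map r : sqnorm_sqrt3 (quad_map f r) = f (sqnorm_sqrt3 r).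
Proof. by case: r => [[[a b] c] d]; rewrite /= !rmorphD !rmorphM. Qed.

End QuadMorphism.

Definition zeta_val (r : int * int * int * int) : algC :=
  let: (a, b, c, d) := r in
  a%:~R + b%:~R * zeta12 + c%:~R * zeta12 ^+ 2 + d%:~R * zeta12 ^+ 3.

Lemma zeta_valD r r' : zeta_val (r + r') = zeta_val r + zeta_val r'.
Proof. by case: r r' => [[[a b] c] d] [[[a' b'] c'] d']; rewrite /= !rmorphD; ring. Qed.

Lemma zeta_val_iter_rot k r : zeta_val (iter k zeta_rot r) = zeta12 ^+ k * zeta_val r.
Proof.
elim: k => [|k IH] /=; first by rewrite mul1r.
rewrite exprS -mulrA -IH; case: (iter k zeta_rot r) => [[[a b] c] d].
by have := zeta12_exp4; rewrite /= rmorphN rmorphD; move: zeta12 => z e4; ring: e4.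
Qed.

Lemma inZzeta_zeta_val r : inZzeta (zeta_val r).
Proof.
case: r => [[[a b] c] d]; apply: inZzetaD; [apply: inZzetaD; [apply: inZzetaD|]|].
2-4: apply: inZzetaM.
all: solve [exact: inZzeta_int | exact: inZzeta_zeta12X | exact: (inZzeta_zeta12X 1)].
Qed.

Lemma inZzeta_coords x : inZzeta x -> exists r, x = zeta_val r.
Proof.
move=> [p ->]; elim/poly_ind: p => [|p c [r hr]].
  by exists 0; rewrite rmorph0 horner0 /=; ring.
exists (iter 1 zeta_rot r + (c, 0, 0, 0)).
rewrite zeta_valD zeta_val_iter_rot rmorphD rmorphM /= map_polyX map_polyC.
by rewrite hornerD hornerMX hr hornerC /=; ring.
Qed.

Lemma conj_zeta12 : zeta12^* = (sqrt3 - 'i) / 2%:R.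
Proof.
rewrite /zeta12 rmorphM rmorphD /= conjCi fmorphV /= conjC_nat.
by rewrite (geC0_conj (x := sqrt3)) // sqrtC_ge0 ler0n.
Qed.

Lemma sqr_norm_zeta_val r :
  `|zeta_val r| ^+ 2 = (sqnorm_int r)%:~R + (sqnorm_sqrt3 r)%:~R * sqrt3.
Proof.
case: r => [[[a b] c] d]; rewrite normCK /=.
have zE : zeta12 = (sqrt3 + 'i) / 2%:R by [].
move: zeta12 zE conj_zeta12 sqrt3_sqr (@sqrCi algC) => z zE zc es ei.
rewrite !(rmorphD, rmorphM, rmorphXn) /= !rmorph_int zc zE.
by move: sqrt3 ('i : algC) es ei => s i es ei; field: ei es.
Qed.

Definition delta_divides (x : algC) := exists2 y, inZzeta y & x = delta * y.

Definition two_divides (x : algC) := exists2 y, inZzeta y & x = 2%:R * y.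

Lemma delta_divides_inZzeta x : delta_divides x -> inZzeta x.
Proof. by move=> [y yZ ->]; apply: inZzetaM inZzeta_delta yZ. Qed.

Local Notation F2quad := ('F_2 * 'F_2 * 'F_2 * 'F_2)%type.

Definition residue (r : int * int * int * int) : F2quad := quad_map intr r.

Definition delta_pattern (s : F2quad) : bool :=
  let: (a, b, c, d) := s in (b == c) && (d == a + b).

Lemma F2_cases (x : 'F_2) : x = 0 \/ x = 1.
Proof. by case: x => [[|[|]]] //= ?; [left | right]; apply/val_inj. Qed.

Lemma sqnorm_delta_pattern s :
  delta_pattern s -> sqnorm_int s = 0 /\ sqnorm_sqrt3 s = 0.
Proof.
suff: delta_pattern s ==> (sqnorm_int s == 0) && (sqnorm_sqrt3 s == 0).
  by move=> /implyP h /h /andP[/eqP-> /eqP->].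
case: s => [[[a b] c] d].
by case: (F2_cases a) => ->; case: (F2_cases b) => ->; case: (F2_cases c) => ->;
  case: (F2_cases d) => ->.
Qed.

Lemma sqnorm_non_delta_pattern s :
  ~~ delta_pattern s -> sqnorm_int s + sqnorm_sqrt3 s = 1.
Proof.
suff: ~~ delta_pattern s ==> (sqnorm_int s + sqnorm_sqrt3 s == 1) by move=> /implyP h /h /eqP.
case: s => [[[a b] c] d].
by case: (F2_cases a) => ->; case: (F2_cases b) => ->; case: (F2_cases c) => ->;
  case: (F2_cases d) => ->.
Qed.

(* The 12 residues outside the pattern are the units of Z[zeta]/2; they form two orbits
   under multiplication by zeta (of order 6 mod 2), told apart by sqnorm_int. *)
Lemma non_delta_pattern_rot s t :
  ~~ delta_pattern s -> ~~ delta_pattern t -> sqnorm_int s = sqnorm_int t ->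
  exists k, s + iter k zeta_rot t = 0.
Proof.
suff: [&& ~~ delta_pattern s, ~~ delta_pattern t & sqnorm_int s == sqnorm_int t] ==>
      has (fun k => s + iter k zeta_rot t == 0) (iota 0 6).
  by move=> + ns nt /eqP e; rewrite ns nt e => /hasP[k _ /eqP]; exists k.
case: s t => [[[a b] c] d] [[[a' b'] c'] d'].
by case: (F2_cases a) => ->; case: (F2_cases b) => ->; case: (F2_cases c) => ->;
  case: (F2_cases d) => ->; case: (F2_cases a') => ->; case: (F2_cases b') => ->;
  case: (F2_cases c') => ->; case: (F2_cases d') => ->.
Qed.

Lemma F2_int_eq0 (x : int) : x%:~R = 0 :> 'F_2 -> exists e, x = e * 2.
Proof. by move/eqP; rewrite -(dvdz_pcharf (pchar_Fp (isT : prime 2))) => /dvdzP. Qed.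

Lemma F2_int_eq (x y : int) : x%:~R = y%:~R :> 'F_2 -> exists e, x = y + e * 2.
Proof.
move/eqP; rewrite -subr_eq0 -rmorphB => /eqP/F2_int_eq0[e he].
by exists e; rewrite -he addrC subrK.
Qed.

Lemma residue0_two_divides r : residue r = 0 -> two_divides (zeta_val r).
Proof.
case: r => [[[a b] c] d].
case=> /F2_int_eq0[ea ->] /F2_int_eq0[eb ->] /F2_int_eq0[ec ->] /F2_int_eq0[ed ->].
exists (zeta_val (ea, eb, ec, ed)); first exact: inZzeta_zeta_val.
by rewrite /= !rmorphM /=; ring.
Qed.

Lemma delta_pattern_delta_divides r : delta_pattern (residue r) -> delta_divides (zeta_val r).
Proof.
case: r => [[[a b] c] d] /andP[/eqP/F2_int_eq[e ->]].
rewrite -rmorphD => /eqP/F2_int_eq[f ->].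
exists (zeta_val (a + c + e * 2 + f, c + e, - e, e + f)); first exact: inZzeta_zeta_val.
rewrite deltaE /= !(rmorphD, rmorphM, rmorphN) /=.
by have := zeta12_exp4; move: zeta12 => z e4; ring: e4.
Qed.

Lemma two_divides_rot_sum r r' k :
  residue r + iter k zeta_rot (residue r') = 0 ->
  two_divides (zeta_val r + zeta12 ^+ k * zeta_val r').
Proof.
rewrite -quad_map_iter_rot -quad_mapD => /residue0_two_divides.
by rewrite zeta_valD zeta_val_iter_rot.
Qed.

Lemma mulmx_entry_supp2 (R : pzSemiRingType) m (A : 'M[R]_m) (v : 'cV[R]_m) i j j' :
  j != j' -> (forall k, k != j -> k != j' -> A i k = 0) ->
  (A *m v) i 0 = A i j * v j 0 + A i j' * v j' 0.
Proof.
move=> jj' A0; rewrite mxE (bigD1 j) // (bigD1 j') 1?eq_sym //= big1 ?addr0 //.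
by move=> k /andP[kj' kj]; rewrite A0 ?mul0r.
Qed.

Lemma two_levelE m (M : 'M[algC]_2) (j j' : 'I_m) (v : 'cV[algC]_m) i : j != j' ->
  (two_level M j j' *m v) i 0 =
  if i == j then M ord0 ord0 * v j 0 + M ord0 ord_max * v j' 0
  else if i == j' then M ord_max ord0 * v j 0 + M ord_max ord_max * v j' 0
  else v i 0.
Proof.
move=> jj'; have j'j : j' != j by rewrite eq_sym.
have [-> | ij] := eqVneq i j; [|have [-> | ij'] := eqVneq i j'].
- rewrite (mulmx_entry_supp2 v (i := j) jj') => [|k kj kj'];
    rewrite !mxE ?eqxx ?(negbTE jj') ?(negbTE j'j) //=.
  by rewrite (negbTE kj) (negbTE kj') eq_sym (negbTE kj).
- rewrite (mulmx_entry_supp2 v (i := j') jj') => [|k kj kj'];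
    rewrite !mxE ?eqxx ?(negbTE jj') ?(negbTE j'j) //=.
  by rewrite (negbTE kj) (negbTE kj') eq_sym (negbTE kj').
- rewrite (mulmx_entry_supp2 v (i := i) ij) => [|k ki kj];
    rewrite !mxE ?eqxx ?(negbTE ij) ?(negbTE ij') //=.
  - by rewrite mul1r mul0r addr0.
  - by rewrite eq_sym (negbTE ki).
Qed.

Lemma one_level_diag m c (j : 'I_m) :
  one_level c j = diag_mx (\row_a (if a == j then c else 1)).
Proof. by apply/matrixP => a b; rewrite !mxE; case: eqP => [->|]; rewrite ?mulr1n. Qed.

Lemma one_levelE m c (j : 'I_m) (v : 'cV[algC]_m) i :
  (one_level c j *m v) i 0 = (if i == j then c else 1) * v i 0.
Proof. by rewrite one_level_diag mul_diag_mx !mxE. Qed.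

Lemma prod_mx_cons m (G : 'M[algC]_m) s : prod_mx (G :: s) = G *m prod_mx s.
Proof. by []. Qed.

Lemma prod_mx_cat m (s1 s2 : seq 'M[algC]_m) : prod_mx (s1 ++ s2) = prod_mx s1 *m prod_mx s2.
Proof.
elim: s1 => [|G s1 IH]; first by rewrite mul1mx.
by rewrite cat_cons !prod_mx_cons IH mulmxA.
Qed.

Lemma one_level_powE m c (j : 'I_m) k (v : 'cV[algC]_m) i :
  (prod_mx (nseq k (one_level c j)) *m v) i 0 = (if i == j then c ^+ k else 1) * v i 0.
Proof.
elim: k => [|k IH]; first by rewrite mul1mx; case: ifP; rewrite ?mul1r.
rewrite prod_mx_cons -mulmxA one_levelE IH.
by case: ifP; rewrite ?mul1r // exprS mulrA.
Qed.

Lemma all_gates_one_level_zeta12 m (j : 'I_m) k : all_gates (nseq k (one_level zeta12 j)).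
Proof. by move=> G /nseqP[-> _]; left; exists j. Qed.

Lemma hadamard_delta_divides m (v : 'cV[algC]_m) (a b : 'I_m) (w : algC) :
  a != b -> (forall i, inZzeta (v i 0)) -> inZzeta w -> v a 0 + v b 0 = 2%:R * w ->
  exists2 G, is_gate G & let v' := G *m v in
    [/\ delta_divides (v' a 0), delta_divides (v' b 0)
      & forall i, i != a -> i != b -> v' i 0 = v i 0].
Proof.
wlog ab : a b / (a < b)%N.
  move=> hw; case: (ltngtP a b) => [ab | ba | /val_inj->]; [exact: hw | | by rewrite eqxx].
  move=> nab vZ wZ s; rewrite addrC in s; rewrite eq_sym in nab.
  have [G gG [da db other]] := hw b a ba nab vZ wZ s.
  by exists G => //; split => // i ia ib; apply: other.
move=> nab vZ wZ s; exists (two_level Hpmat a b); first by right; exists a, b; split; [|right].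
have va : v a 0 = 2%:R * w - v b 0 by rewrite -s addrK.
rewrite /= !two_levelE // !eqxx eq_sym (negbTE nab) !mxE /= -/delta va.
split.
- by exists w => //; field.
- by exists (w - v b 0); [apply: inZzetaB | field].
- by move=> i /negbTE ia /negbTE ib; rewrite two_levelE // ia ib.
Qed.

Lemma rot_pair_delta_divides m (v : 'cV[algC]_m) (i j : 'I_m) k :
  i != j -> (forall h, inZzeta (v h 0)) -> two_divides (v i 0 + zeta12 ^+ k * v j 0) ->
  exists2 Gs, all_gates Gs & let v' := prod_mx Gs *m v in
    [/\ delta_divides (v' i 0), delta_divides (v' j 0)
      & forall h, h != i -> h != j -> v' h 0 = v h 0].
Proof.
move=> ij vZ [w wZ s].
pose P := prod_mx (nseq k (one_level zeta12 j)).
have PvZ h : inZzeta ((P *m v) h 0).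
  rewrite one_level_powE; case: ifP => _; last by rewrite mul1r.
  exact: inZzetaM (inZzeta_zeta12X k) (vZ h).
have Ps : (P *m v) i 0 + (P *m v) j 0 = 2%:R * w.
  by rewrite !one_level_powE eqxx (negbTE ij) mul1r.
have [G gG [di dj other]] := hadamard_delta_divides ij PvZ wZ Ps.
exists (G :: nseq k (one_level zeta12 j)).
  by move=> G'; rewrite inE => /predU1P[-> // | ]; apply: all_gates_one_level_zeta12.
rewrite prod_mx_cons -mulmxA -/P; split => // h hi hj.
by rewrite other // one_level_powE (negbTE hj) mul1r.
Qed.

Lemma odd_card_setD2 (T : finType) (X : {set T}) (a b : T) :
  a != b -> (a \in X) = (b \in X) -> odd #|X :\ a :\ b| = odd #|X|.
Proof.
move=> ab abX; rewrite [in RHS](cardsD1 a) [in RHS](cardsD1 b (X :\ a)) !inE eq_sym ab -abX.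
by case: (a \in X) => //=; rewrite negbK.
Qed.

Lemma pairing_delta_divides (T : eqType) m (B : {set 'I_m}) (cl : 'I_m -> T)
    (v : 'cV[algC]_m) :
  (forall i, inZzeta (v i 0)) ->
  (forall i, i \notin B -> delta_divides (v i 0)) ->
  (forall i j, i \in B -> j \in B -> i != j -> cl i = cl j ->
     exists k, two_divides (v i 0 + zeta12 ^+ k * v j 0)) ->
  (forall c, ~~ odd #|[set i in B | cl i == c]|) ->
  exists2 Gs, all_gates Gs & forall i, delta_divides ((prod_mx Gs *m v) i 0).
Proof.
have [n] := ubnP #|B|; elim: n B v => // n IH B v ltBn vZ vout vpair even.
have [B0 | [j jB]] := set_0Vmem B.
  by exists [::] => [G | i]; rewrite ?in_nil // mul1mx; apply: vout; rewrite B0 inE.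
pose A := [set i in B | cl i == cl j].
have /card_gt0P[j' ] : (0 < #|A :\ j|)%N.
  by have := even (cl j); rewrite (cardsD1 j) !inE jB eqxx /= negbK => /odd_gt0.
rewrite !inE => /and3P[j'j j'B /eqP clj']; have jj' : j != j' by rewrite eq_sym.
have [k hk] := vpair j j' jB j'B jj' (esym clj').
have [Gs1 gates1 [dj dj' other]] := rot_pair_delta_divides jj' vZ hk.
set v1 := prod_mx Gs1 *m v in dj dj' other.
have v1Z h : inZzeta (v1 h 0).
  have [-> | hj] := eqVneq h j; first exact: delta_divides_inZzeta.
  have [-> | hj'] := eqVneq h j'; first exact: delta_divides_inZzeta.
  by rewrite other.
have [Gs2 gates2 div2] : exists2 Gs, all_gates Gs &
    forall i, delta_divides ((prod_mx Gs *m v1) i 0).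
  apply: (IH (B :\ j :\ j')) => //.
  - rewrite -ltnS (leq_trans _ ltBn) // ltnS (cardsD1 j B) jB add1n ltnS.
    by apply/subset_leq_card/subsetP => i; rewrite !inE => /andP[].
  - move=> i; rewrite !inE negb_and negbK negb_and negbK.
    have [-> // | ij /=] := eqVneq i j'; have [-> // | ij' /= iB] := eqVneq i j.
    by rewrite other //; apply: vout.
  - move=> i i'; rewrite !inE => /and3P[ij' ij iB] /and3P[i'j' i'j i'B] ii' cl_eq.
    by rewrite !other //; apply: vpair.
  - move=> c; have -> : [set i in B :\ j :\ j' | cl i == c]
                        = [set i in B | cl i == c] :\ j :\ j'.
      by apply/setP => i; rewrite !inE -!andbA; do 2 bool_congr.
    by rewrite odd_card_setD2 ?even // 1?eq_sym // !inE jB j'B clj'.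
exists (Gs2 ++ Gs1) => [G | i]; last by rewrite prod_mx_cat -mulmxA.
by rewrite mem_cat => /orP[/gates2 | /gates1].
Qed.

Lemma F2_nat_eq0_even n : n%:R = 0 :> 'F_2 -> ~~ odd n.
Proof. by move/eqP; rewrite -(dvdn_pcharf (pchar_Fp (isT : prime 2))) dvdn2. Qed.

Lemma card_F2_eq1 (I : finType) (A : {set I}) (f : I -> 'F_2) :
  #|[set i in A | f i == 1]|%:R = \sum_(i in A) f i.
Proof.
rewrite -sum1_card (eq_bigl (fun i => (i \in A) && (f i == 1))) => [|i]; last by rewrite inE.
rewrite big_mkcondr natr_sum; apply: eq_bigr => i _.
by case: (F2_cases (f i)) => ->.
Qed.

Lemma even_residue_classes m (s : 'I_m -> F2quad) :
  \sum_i sqnorm_int (s i) = 0 -> \sum_i sqnorm_sqrt3 (s i) = 0 ->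
  forall c, ~~ odd #|[set i in [set i | ~~ delta_pattern (s i)] | sqnorm_int (s i) == c]|.
Proof.
set B := [set i | _] => sum_int sum_sqrt3 c; apply: F2_nat_eq0_even.
have sum_B (f : F2quad -> 'F_2) :
    (forall x, delta_pattern x -> f x = 0) -> \sum_(i in B) f (s i) = \sum_i f (s i).
  move=> f0; rewrite [RHS](bigID (mem B)) /= [X in _ + X]big1 ?addr0 // => i.
  by rewrite inE negbK; apply: f0.
case: (F2_cases c) => ->; last first.
  by rewrite card_F2_eq1 sum_B // => x /sqnorm_delta_pattern[].
have -> : [set i in B | sqnorm_int (s i) == 0] = [set i in B | sqnorm_sqrt3 (s i) == 1].
  apply/setP => i; rewrite !inE; case: (boolP (delta_pattern _)) => //= /sqnorm_non_delta_pattern.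
  move: (sqnorm_int _) (sqnorm_sqrt3 _) => a b /eqP.
  by case: (F2_cases a) => ->; case: (F2_cases b) => ->.
by rewrite card_F2_eq1 sum_B // => x /sqnorm_delta_pattern[].
Qed.

Lemma sqnorm_sum_coords m (u : 'cV[algC]_m) l (r : 'I_m -> int * int * int * int) :
  unit_vec u -> (forall i, delta ^+ l * u i 0 = zeta_val (r i)) ->
  \sum_i sqnorm_int (r i) = 2 ^+ l /\ \sum_i sqnorm_sqrt3 (r i) = 0.
Proof.
move=> unit_u hr.
have sum_sq : (\sum_i sqnorm_int (r i))%:~R + (\sum_i sqnorm_sqrt3 (r i))%:~R * sqrt3
              = 2%:R ^+ l :> algC.
  transitivity (2%:R ^+ l * \sum_i `|u i 0| ^+ 2); last by rewrite unit_u mulr1.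
  rewrite !rmorph_sum mulr_suml -big_split mulr_sumr; apply: eq_bigr => i _ /=.
  rewrite -sqr_norm_zeta_val -hr normrM normrX exprMn.
  by rewrite -exprM mulnC exprM sqr_norm_delta.
have sum_sqrt3 : \sum_i sqnorm_sqrt3 (r i) = 0.
  apply: (@sqrt3_irrational (\sum_i sqnorm_int (r i) - 2 ^+ l)).
  by rewrite rmorphB rmorphXn /= -addrAC sum_sq subrr.
split => //; apply: (intr_inj (R := algC)).
by rewrite rmorphXn /= -sum_sq sum_sqrt3 mul0r addr0.
Qed.

Lemma residue_sqnorm_sums m (r : 'I_m -> int * int * int * int) l : (0 < l)%N ->
  \sum_i sqnorm_int (r i) = 2 ^+ l -> \sum_i sqnorm_sqrt3 (r i) = 0 ->
  \sum_i sqnorm_int (residue (r i)) = 0 /\ \sum_i sqnorm_sqrt3 (residue (r i)) = 0.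
Proof.
move=> l_gt0 sum_int sum_sqrt3.
rewrite (eq_bigr _ (fun i _ => sqnorm_int_map _ (r i))).
rewrite (eq_bigr _ (fun i _ => sqnorm_sqrt3_map _ (r i))) -!rmorph_sum sum_int sum_sqrt3.
by rewrite rmorphXn rmorph0 /= -[2%:~R]/(2%:R) pchar_Fp_0 // -(prednK l_gt0) exprS mul0r.
Qed.

Lemma is_lde_exists m (w : 'cV[algC]_m) n : lde_ok w n -> exists2 l, is_lde w l & (l <= n)%N.
Proof.
move=> ok_n.
have [l [[ok_l l_min] _]] := dec_inh_nat_subset_has_unique_least_element (lde_ok w)
  (fun k => classic (lde_ok w k)) (ex_intro _ n ok_n).
by exists l; [split=> // k /l_min/ssrnat.leP | apply/ssrnat.leP/l_min].
Qed.

Lemma lde_ok_pred m (w : 'cV[algC]_m) l :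
  (0 < l)%N -> (forall i, delta_divides ((delta ^+ l *: w) i 0)) -> lde_ok w l.-1.
Proof.
move=> l_gt0 div i; have [y yZ] := div i; rewrite mxE -(prednK l_gt0) exprS -mulrA.
by move/(mulfI delta_neq0) ->.
Qed.

Theorem lemma7p4 (m : nat) (u : 'cV[algC]_m) (l : nat) :
  (forall i, inR12 (u i 0)) ->
  unit_vec u ->
  is_lde u l ->
  (1 <= l)%N ->
  exists (Gs : seq 'M[algC]_m) (l' : nat),
    all_gates Gs /\ is_lde (prod_mx Gs *m u) l' /\ (l' < l)%N.
Proof.
(* membership in R12 already follows from [is_lde u l] *)
move=> _ unit_u [ok_l _] l_gt0.
have [r hr] := fin_all_exists (fun i => inZzeta_coords (ok_l i)).
have [sum_int sum_sqrt3] := sqnorm_sum_coords unit_u hr.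
have [res_int res_sqrt3] := residue_sqnorm_sums l_gt0 sum_int sum_sqrt3.
have [Gs gates div] : exists2 Gs, all_gates Gs &
    forall i, delta_divides ((prod_mx Gs *m (delta ^+ l *: u)) i 0).
  apply: (pairing_delta_divides (B := [set i | ~~ delta_pattern (residue (r i))])
                                (cl := fun i => sqnorm_int (residue (r i)))).
  - by move=> i; rewrite mxE hr; apply: inZzeta_zeta_val.
  - by move=> i; rewrite inE negbK mxE hr; apply: delta_pattern_delta_divides.
  - move=> i j; rewrite !inE !mxE !hr => ni nj _ /(non_delta_pattern_rot ni nj)[k hk].
    by exists k; apply: two_divides_rot_sum.
  - exact: even_residue_classes res_int res_sqrt3.
have ok_pred : lde_ok (prod_mx Gs *m u) l.-1.
  by apply: lde_ok_pred l_gt0 _ => i; rewrite scalemxAr.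
have [l' lde_l' le_l'] := is_lde_exists ok_pred.
exists Gs, l'; split => //; split => //.
by rewrite (leq_ltn_trans le_l') // ltn_predL.
Qed.
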